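(* Let $(U,\mathcal{S},w,k',p')$ be an instance of the maximization version of $k'$-WEC, and for $1\le i\le k'$ let $\mathcal{S}_i=\{S\in\mathcal{S}:|S|=i\}$. For each $1\le i\le k'$ let $\widehat{\mathcal{S}}_i\subseteq\mathcal{S}_i$ be a subfamily that max represents $\mathcal{S}_i$ with respect to universe $U$, integers $k'$ and $i$, and weight function $w$, and let $\widehat{\mathcal{S}}=\bigcup_{i=1}^{k'}\widehat{\mathcal{S}}_i$. Then $(U,\mathcal{S},w,k',p')$ is a yes-instance if and only if $(U,\widehat{\mathcal{S}},w,k',p')$ is a yes-instance.
   Context: Maximization version of Weighted $k'$-Exact Cover ($k'$-WEC): given a universe $U$, a family $\mathcal{S}$ of nonempty subsets of $U$, a function $w:\mathcal{S}\to\mathbb{R}$, $k'\in\mathbb{N}$ and $p'\in\mathbb{R}$, decide whether there is a subfamily $\mathcal{S}'\subseteq\mathcal{S}$ of pairwise disjoint sets with $|\bigcup\mathcal{S}'|=k'$ and $\sum_{S\in\mathcal{S}'}w(S)\ge p'$. Representation: given a universe $E$, nonnegative integers $k$ and $p$, a family $\mathcal{S}$ of subsets of $E$ of size $p$, and $w:\mathcal{S}\to\mathbb{R}$, a subfamily $\widehat{\mathcal{S}}\subseteq\mathcal{S}$ max represents $\mathcal{S}$ if for every $X\in\mathcal{S}$ and every $Y\subseteq E\setminus X$ with $|Y|\le k-p$ there is $\widehat{X}\in\widehat{\mathcal{S}}$ disjoint from $Y$ with $w(\widehat{X})\ge w(X)$. *)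

From mathcomp Require Import all_boot all_order all_algebra.
Set Implicit Arguments. Unset Strict Implicit. Unset Printing Implicit Defensive.
Import Order.TTheory GRing.Theory Num.Theory.
Local Open Scope ring_scope.

Definition wec_yes (U : finType) (R : realDomainType)
  (fam : {set {set U}}) (w : {set U} -> R) (k' : nat) (p' : R) : Prop :=
  exists F : {set {set U}},
    [/\ F \subset fam,
        (forall A B, A \in F -> B \in F -> A != B -> [disjoint A & B]),
        #|cover F| = k' &
        p' <= \sum_(S in F) w S].

Definition max_represents (U : finType) (R : realDomainType)
  (k p : nat) (fam famhat : {set {set U}}) (w : {set U} -> R) : Prop :=
  famhat \subset fam /\
  forall X, X \in fam -> forall Y : {set U},
    [disjoint X & Y] -> (#|Y| <= k - p)%N ->
    exists2 Xh, Xh \in famhat & [disjoint Xh & Y] /\ w X <= w Xh.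

Definition fam_size (U : finType) (fam : {set {set U}}) (i : nat) : {set {set U}} :=
  [set S in fam | #|S| == i].

(* Take a solution with as few members outside the representative family as
   possible and suppose some member X is outside it.  The other members cover
   a set Y of exactly k' - |X| elements disjoint from X, so the representative
   family of the layer of size |X| contains some X' disjoint from Y with
   w X <= w X'.  Swapping X for X' keeps the members pairwise disjoint, keeps
   the size of the union (|X'| = |X|) and does not decrease the weight, while
   decreasing the number of members outside the representative family.  The
   converse direction is immediate since the representatives form a
   subfamily. *)
From mathcomp Require Import all_boot all_order all_algebra.
Set Implicit Arguments. Unset Strict Implicit. Unset Printing Implicit Defensive.
Import Order.TTheory GRing.Theory Num.Theory.
Local Open Scope ring_scope.

Section ExactCover.

Variables (U : finType) (R : realDomainType).
Implicit Types (fam famhat F : {set {set U}}) (X Y : {set U}).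

Definition wec_solution fam (w : {set U} -> R) (k : nat) (p : R) F :=
  [/\ F \subset fam, trivIset F, #|cover F| = k & p <= \sum_(S in F) w S].

Lemma wec_yesP fam w k p :
  wec_yes fam w k p <-> exists F, wec_solution fam w k p F.
Proof.
split=> [[F [sFfam /trivIsetP tiF coverF wF]] | [F [sFfam /trivIsetP tiF coverF wF]]].
  by exists F; split.
by exists F; split=> // A B; apply: tiF.
Qed.

Lemma wec_solutionS fam famhat w k p F :
  famhat \subset fam -> wec_solution famhat w k p F -> wec_solution fam w k p F.
Proof. by move=> sfam [sF tiF coverF wF]; split=> //; apply: subset_trans sfam. Qed.

Lemma card_cover_setD1 F X : trivIset F -> X \in F ->
  #|cover (F :\ X)| = (#|cover F| - #|X|)%N.
Proof. by move=> tiF FX; rewrite coverD1 // cardsDS // bigcup_sup. Qed.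

Lemma disjoint_cover_setD1 F X : trivIset F -> X \in F ->
  [disjoint X & cover (F :\ X)].
Proof.
move=> tiF FX; rewrite coverD1 // -setI_eq0; apply/eqP/setP=> x.
by rewrite !inE; case: (x \in X).
Qed.

Lemma wec_solution_exchange fam w k p F X X' :
  wec_solution fam w k p F -> X \in F -> X' \in fam -> X' != set0 ->
  #|X'| = #|X| -> [disjoint X' & cover (F :\ X)] -> w X <= w X' ->
  wec_solution fam w k p (X' |: F :\ X).
Proof.
move=> [sFfam tiF coverF wF] FX famX' X'_neq0 cardX' disX' wX'.
have X'_notin : X' \notin F :\ X.
  apply: contra X'_neq0 => FX'; rewrite -subset0 -(setIid X').
  by rewrite (disjoint_setI0 (disjointWr (bigcup_sup _ FX') disX')).
have cover_new : cover (X' |: F :\ X) = X' :|: cover (F :\ X).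
  by rewrite /cover bigcup_setU -/(cover _) cover1.
split.
- by rewrite subUset sub1set famX' (subset_trans (subsetDl _ _)).
- by apply: trivIsetU; rewrite ?trivIset1 ?trivIsetD ?cover1.
- rewrite cover_new cardsU (disjoint_setI0 disX') cards0 subn0.
  rewrite card_cover_setD1 // cardX' subnKC //.
  exact/subset_leq_card/bigcup_sup.
- rewrite big_setU1 //= (le_trans wF) // (big_setD1 X FX) /=.
  by rewrite lerD2r.
Qed.

(* The layers of max representation merged into one family; the
   representative must then be required to have the size of X. *)
Definition size_rep famhat fam (w : {set U} -> R) (k : nat) :=
  forall X, X \in fam -> (#|X| <= k)%N ->
  forall Y, [disjoint X & Y] -> (#|Y| <= k - #|X|)%N ->
  exists2 X', X' \in famhat & [/\ #|X'| = #|X|, [disjoint X' & Y] & w X <= w X'].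

Lemma wec_solution_rep fam famhat w k p F :
  (forall S, S \in fam -> S != set0) -> famhat \subset fam ->
  size_rep famhat fam w k -> wec_solution fam w k p F ->
  exists F', wec_solution famhat w k p F'.
Proof.
move=> fam_neq0 sfam rep.
have [n] := ubnP #|F :\: famhat|; elim: n F => // n IHn F ltFn solF.
have [sFfamhat | /subsetPn[X FX famhatX]] := boolP (F \subset famhat).
  by case: solF => _ tiF coverF wF; exists F; split.
case: (solF) => sFfam tiF coverF _.
have famX : X \in fam by apply: (subsetP sFfam).
have leXk : (#|X| <= k)%N by rewrite -coverF; apply/subset_leq_card/bigcup_sup.
have [|X' famhatX' [cardX' disX' wX']] :=
  rep X famX leXk _ (disjoint_cover_setD1 tiF FX).
  by rewrite card_cover_setD1 // coverF.
have famX' : X' \in fam by apply: (subsetP sfam).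
apply: (IHn (X' |: F :\ X)); last first.
  exact: wec_solution_exchange solF FX famX' (fam_neq0 _ famX') cardX' disX' wX'.
rewrite -ltnS (leq_trans _ ltFn) // ltnS (cardsD1 X (F :\: famhat)) !inE FX famhatX.
apply/subset_leq_card/subsetP=> S; rewrite !inE.
by case: eqP => [-> | _]; rewrite ?famhatX' ?andbF //= andbCA.
Qed.

End ExactCover.

Lemma layers_size_rep (U : finType) (R : realDomainType)
  (fam : {set {set U}}) (w : {set U} -> R) (k : nat) (Shat : nat -> {set {set U}}) :
  (forall S, S \in fam -> S != set0) ->
  (forall i, (1 <= i <= k)%N -> Shat i \subset fam_size fam i /\
     max_represents k i (fam_size fam i) (Shat i) w) ->
  size_rep (\bigcup_(1 <= i < k.+1) Shat i) fam w k.
Proof.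
move=> fam_neq0 layers X famX leXk Y disXY leY.
have leX1 : (1 <= #|X|)%N by rewrite card_gt0 fam_neq0.
have [sShat [_ repX]] := layers _ (introT andP (conj leX1 leXk)).
have [|X' ShatX' [disX' wX']] := repX X _ Y disXY leY; first by rewrite inE famX /=.
exists X'; last by move: (subsetP sShat _ ShatX'); rewrite inE => /andP[_ /eqP].
have ltXk : (#|X|.-1 < k)%N by rewrite prednK.
rewrite big_add1 /= big_mkord; apply/bigcupP.
by exists (Ordinal ltXk); rewrite //= prednK.
Qed.

Theorem lemma4 (U : finType) (R : realFieldType)
  (fam : {set {set U}}) (w : {set U} -> R) (k' : nat) (p' : R)
  (Shat : nat -> {set {set U}}) :
  (forall S, S \in fam -> S != set0) ->
  (forall i, (1 <= i <= k')%N ->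
     Shat i \subset fam_size fam i /\
     max_represents k' i (fam_size fam i) (Shat i) w) ->
  wec_yes fam w k' p' <->
  wec_yes (\bigcup_(1 <= i < k'.+1) Shat i) w k' p'.
Proof.
move=> fam_neq0 layers.
have sShat : \bigcup_(1 <= i < k'.+1) Shat i \subset fam.
  rewrite big_add1 /= big_mkord; apply/bigcupsP=> i _.
  have [sShat_i _] := layers i.+1 (ltn_ord i).
  by apply: subset_trans sShat_i _; apply/subsetP=> S; rewrite inE => /andP[].
split=> /wec_yesP[F solF]; apply/wec_yesP.
  exact: wec_solution_rep fam_neq0 sShat (layers_size_rep fam_neq0 layers) solF.
by exists F; apply: wec_solutionS sShat solF.
Qed.
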